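(* Let $\phi:X\to Y$ be a morphism of $\mathrm{Agg}^{\rm ctd}$. Then the automorphism group of $\phi$ in the arrow category, i.e. the group of pairs $(\alpha,\beta)\in\mathrm{Aut}(X)\times\mathrm{Aut}(Y)$ with $\beta\circ\phi=\phi\circ\alpha$, is isomorphic to the automorphism group (in $\mathrm{Gr}$) of the ghost graph $\mathbb{\Gamma}(\phi)$.
   Context: A graph $\Gamma=(F,V,\partial,\imath)$ consists of finite sets $F$ (flags) and $V$ (vertices), a map $\partial:F\to V$ and an involution $\imath$ of $F$. The two-element orbits of $\imath$ are the edges, the fixed points the outer flags. A graph morphism $\phi:\Gamma\to\Gamma'=(F',V',\partial',\imath')$ is a triple $(\phi_V,\phi^F,\imath_\phi)$ with $\phi_V:V\to V'$ surjective, $\phi^F:F'\to F$ injective and $\imath_\phi$ a fixed-point-free involution of $F\setminus\phi^F(F')$, such that: (i) $\phi_V\partial\phi^F=\partial'$ and $\phi_V\partial(f)=\phi_V\partial(\imath_\phi f)$ for $f\notin\phi^F(F')$; (ii) for $f\notin\phi^F(F')$, either $\{f,\imath f\}$ is an edge of $\Gamma$ and $\imath_\phi f=\imath f$, or $f$ and $\imath_\phi f$ are both outer flags of $\Gamma$; (iii) if $f'\in F'$ and $\phi^F(f')$ lies on an edge of $\Gamma$, then $\imath(\phi^F f')=\phi^F(\imath' f')$. Composition: $(\psi\phi)_V=\psi_V\phi_V$, $(\psi\phi)^F=\phi^F\psi^F$, $\imath_{\psi\phi}$ equals $\imath_\phi$ off $\phi^F(F')$ and $\phi^F\imath_\psi(\phi^F)^{-1}$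 on $\phi^F(F'\setminus\psi^F(F''))$; this is the category $\mathrm{Gr}$. Isomorphisms: $\phi_V,\phi^F$ bijective. The ghost graph of $\phi$ is $\mathbb{\Gamma}(\phi)=(F,V,\partial,\hat\imath_\phi)$, $\hat\imath_\phi$ extending $\imath_\phi$ by the identity on $\phi^F(F')$. An aggregate is a graph with $\imath=\mathrm{id}$. For distinct outer flags $s,t$ of an aggregate, the virtual edge contraction ${}_s\circ_t$ ($\partial s\neq\partial t$) resp. virtual loop contraction $\circ_{st}$ ($\partial s=\partial t$) is the morphism $(\text{quotient } V\to V/(\partial s\sim\partial t),\ \text{inclusion } F\setminus\{s,t\}\hookrightarrow F,\ \imath_\phi(s)=t)$. $\mathrm{Agg}^{\rm ctd}$ is the category of aggregates whose morphisms are generated by isomorphisms and virtual edge and loop contractions. *)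

From mathcomp Require Import all_boot.
Set Implicit Arguments. Unset Strict Implicit. Unset Printing Implicit Defensive.

Record graph := Graph {
  flag : finType; vert : finType; bd : flag -> vert; iv : flag -> flag }.
Arguments bd : clear implicits.
Arguments iv : clear implicits.

Definition is_graph (G : graph) : Prop := involutive (iv G).
Definition aggregate (G : graph) : Prop := forall f, iv G f = f.

(* A graph morphism G -> H: (phi_V, phi^F, hat-i_phi), where the involution
   i_phi of F \ phi^F(F') is stored as its extension hat-i_phi by the identity
   on phi^F(F') (the ghost involution); this makes the representation unique. *)
Record morph (G H : graph) := Morph {
  mV : {ffun vert G -> vert H};
  mF : {ffun flag H -> flag G};
  mi : {ffun flag G -> flag G} }.

Definition in_img (G H : graph) (p : morph G H) (f : flag G) : bool :=
  [exists f', mF p f' == f].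

Definition is_morph (G H : graph) (p : morph G H) : Prop :=
  (forall v', exists v, mV p v = v') /\
  injective (mF p) /\
  (forall f, in_img p f -> mi p f = f) /\
  (forall f, ~~ in_img p f -> mi p f != f /\ mi p (mi p f) = f) /\
  (forall f', mV p (bd G (mF p f')) = bd H f') /\
  (forall f, ~~ in_img p f -> mV p (bd G f) = mV p (bd G (mi p f))) /\
  (forall f, ~~ in_img p f ->
     (iv G f != f /\ mi p f = iv G f) \/ (iv G f = f /\ iv G (mi p f) = mi p f)) /\
  (forall f', iv G (mF p f') != mF p f' -> iv G (mF p f') = mF p (iv H f')).

Definition mcomp (G H K : graph) (q : morph H K) (p : morph G H) : morph G K :=
  Morph [ffun v => mV q (mV p v)]
        [ffun f'' => mF p (mF q f'')]
        [ffun f => match [pick f' | mF p f' == f] with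
                   | Some f' => mF p (mi q f')
                   | None => mi p f end].

Definition is_iso (G H : graph) (p : morph G H) : Prop :=
  is_morph p /\ bijective (mV p) /\ bijective (mF p).

Definition ghost (G H : graph) (p : morph G H) : graph :=
  @Graph (flag G) (vert G) (bd G) (fun f => mi p f).

(* Virtual edge/loop contraction of an aggregate X at distinct flags s, t.  Target vertices: V / (bd s ~ bd t), represented by
   the vertices other than bd t (or all of V when bd s = bd t). *)
Definition vc_F (X : graph) (s t : flag X) : finType :=
  {f : flag X | (f != s) && (f != t)}.
Definition vc_V (X : graph) (s t : flag X) : finType :=
  {v : vert X | (v != bd X t) || (bd X s == bd X t)}.
Definition vc_base (X : graph) (s t : flag X) : vc_V s t :=
  @exist _ (fun v => is_true ((v != bd X t) || (bd X s == bd X t)))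
    (bd X s) (orNb (bd X s == bd X t)).
Definition vc_q (X : graph) (s t : flag X) (v : vert X) : vc_V s t :=
  insubd (vc_base s t) (if v == bd X t then bd X s else v).
Definition vc_graph (X : graph) (s t : flag X) : graph :=
  @Graph (vc_F s t) (vc_V s t) (fun f => vc_q s t (bd X (val f))) (fun f => f).
Definition vc_morph (X : graph) (s t : flag X) : morph X (vc_graph s t) :=
  @Morph X (vc_graph s t) [ffun v => vc_q s t v : vert (vc_graph s t)]
        [ffun f : flag (vc_graph s t) => (val f : flag X)]
        [ffun f => if f == s then t else if f == t then s else f].

Inductive ctd : forall (G H : graph), morph G H -> Prop :=
| ctd_iso (G H : graph) (p : morph G H) :
    aggregate G -> aggregate H -> is_iso p -> ctd p
| ctd_vc (X : graph) (s t : flag X) :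
    aggregate X -> s != t -> ctd (vc_morph s t)
| ctd_comp (G H K : graph) (p : morph G H) (q : morph H K) :
    ctd p -> ctd q -> ctd (mcomp q p).

Definition arrow_aut (X Y : graph) (phi : morph X Y) (ab : morph X X * morph Y Y) : Prop :=
  is_iso ab.1 /\ is_iso ab.2 /\ mcomp ab.2 phi = mcomp phi ab.1.

From mathcomp Require Import all_boot.
From Stdlib Require Import Relation_Operators.
Set Implicit Arguments. Unset Strict Implicit. Unset Printing Implicit Defensive.

(* Every morphism phi : X -> Y of Agg^ctd is a contraction: its vertex map is
   onto and its fibres are the connected components of the ghost graph, while
   its flag map is injective with image the outer flags of the ghost graph.
   The isomorphism sends (a, b) to a, viewed as an automorphism of the ghost
   graph; a commutes with the ghost involution because b phi = phi a, and b is
   determined by a because phi is onto on vertices and injective on flags.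
   Conversely an automorphism g of the ghost graph permutes its outer flags and
   its connected components, i.e. the image of phi^F and the fibres of phi_V,
   so it descends to an automorphism b of Y with b phi = phi g. *)

Lemma surjF_bij (T : finType) (f : T -> T) : (forall y, exists x, f x = y) -> bijective f.
Proof.
move=> /fin_all_exists [s sK].
have sK' : cancel s f by [].
exact: (@bij_can_bij _ _ s (injF_bij (can_inj sK')) f sK').
Qed.

Lemma morph_eq (G H : graph) (p q : morph G H) :
  mV p =1 mV q -> mF p =1 mF q -> mi p =1 mi q -> p = q.
Proof.
by case: p q => [pV pF pi] [qV qF qi] /= /ffunP -> /ffunP -> /ffunP ->.
Qed.

Section Morphisms.
Variables G H K : graph.

Lemma in_imgP (p : morph G H) f : reflect (exists f', mF p f' = f) (in_img p f).
Proof. by apply: (iffP existsP) => -[f' /eqP]; exists f'. Qed.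

Lemma iso_in_img (p : morph G H) f : is_iso p -> in_img p f.
Proof. by case=> _ [_ [g _ gK]]; apply/in_imgP; exists (g f). Qed.

Lemma iso_mi (p : morph G H) f : is_iso p -> mi p f = f.
Proof. by move=> isop; case: (isop) => -[_ [_ [fixp _]]] _; exact/fixp/iso_in_img. Qed.

Lemma iso_injF (p : morph G H) : is_iso p -> injective (mF p).
Proof. by case=> _ [_ /bij_inj]. Qed.

Lemma iso_bdF (p : morph G H) f' : is_iso p -> mV p (bd G (mF p f')) = bd H f'.
Proof. by case=> -[_ [_ [_ [_ [bdp _]]]]]. Qed.

Lemma mcomp_mi_img (q : morph H K) (p : morph G H) f' :
  injective (mF p) -> mi (mcomp q p) (mF p f') = mF p (mi q f').
Proof.
move=> injp; rewrite ffunE; case: pickP => [f1 /eqP/injp -> //|/(_ f')].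
by rewrite eqxx.
Qed.

Lemma mcomp_mi_out (q : morph H K) (p : morph G H) f :
  ~~ in_img p f -> mi (mcomp q p) f = mi p f.
Proof.
move=> /in_imgP nIf; rewrite ffunE; case: pickP => // f1 /eqP E.
by case: nIf; exists f1.
Qed.

Lemma mcomp_mi_iso (q : morph H K) (p : morph G H) :
  (forall f, in_img p f -> mi p f = f) -> (forall f', mi q f' = f') ->
  mi (mcomp q p) =1 mi p.
Proof.
move=> fixp fixq f; case: (boolP (in_img p f)) => [Ipf|/mcomp_mi_out //].
rewrite ffunE fixp //; case: pickP => [f1 /eqP <-|//]; by rewrite fixq.
Qed.

End Morphisms.

Definition adj (G : graph) (x y : vert G) : Prop :=
  exists f, iv G f != f /\ bd G f = x /\ bd G (iv G f) = y.

Notation conn G := (clos_refl_trans (vert G) (@adj G)).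

Section Automorphisms.
Variables (G : graph) (g : morph G G).
Hypothesis isog : is_iso g.

Let injg := iso_injF isog.

(* By (iii), [mF g] maps outer flags to outer flags; being injective on a finite
   set, it then permutes them, so it also maps inner flags to inner flags. *)
Lemma aut_ivC f : iv G (mF g f) = mF g (iv G f).
Proof.
have [[_ [_ [_ [_ [_ [_ [_ ivg]]]]]]] _] := isog.
pose outer := [set h | iv G h == h].
have outer_stable h : h \in outer -> mF g h \in outer.
  rewrite !inE => /eqP ivh; apply/eqP.
  by have [//|/ivg ->] := eqVneq (iv G (mF g h)) (mF g h); rewrite ivh.
have outerE : mF g @: outer = outer.
  apply/eqP; rewrite eqEcard card_imset // leqnn andbT.
  by apply/subsetP => _ /imsetP [h /outer_stable ? ->].
have [/eqP out_gf|/ivg //] := boolP (iv G (mF g f) == mF g f).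
have : mF g f \in mF g @: outer by rewrite outerE inE out_gf.
by rewrite mem_imset // inE => /eqP ->.
Qed.

Lemma aut_adj x y : adj x y -> adj (mV g x) (mV g y).
Proof.
have [[_ [_ [_ [_ [bdg _]]]]] [_ [ginv _ ginvK]]] := isog.
case=> f [+ [<- <-]]; have [h ->] : exists h, f = mF g h.
  by exists (ginv f); rewrite ginvK.
rewrite aut_ivC (inj_eq injg) !bdg => ivh.
by exists h.
Qed.

Lemma aut_conn x y : conn G x y -> conn G (mV g x) (mV g y).
Proof.
elim=> [u v /aut_adj|u|u v w _ IHuv _ IHvw].
- exact: rt_step.
- exact: rt_refl.
- exact: rt_trans IHuv IHvw.
Qed.

End Automorphisms.

Lemma endo_iso (G : graph) (p : morph G G) :
  (forall v', exists v, mV p v = v') -> injective (mF p) -> (forall f, mi p f = f) ->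
  (forall f', mV p (bd G (mF p f')) = bd G f') ->
  (forall f', iv G (mF p f') = mF p (iv G f')) -> is_iso p.
Proof.
move=> surjV injF miid bdp ivp.
have bijF := injF_bij injF.
have Ip f : in_img p f by case: bijF => h _ hK; apply/in_imgP; exists (h f).
split; last by split; [apply: surjF_bij|].
have nIp f : ~~ in_img p f -> False by rewrite Ip.
split=> //; split=> //; split; first by move=> f.
split; first by move=> f /nIp.
split=> //; split; first by move=> f /nIp.
split; first by move=> f /nIp.
by move=> f' _.
Qed.

Record contraction (G H : graph) (p : morph G H) : Prop := Contraction {
  contr_aggl : aggregate G;
  contr_aggr : aggregate H;
  contr_surjV : forall v', exists v, mV p v = v';
  contr_injF : injective (mF p);
  contr_imgE : forall f, in_img p f = (mi p f == f);
  contr_miK : involutive (mi p);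
  contr_bdF : forall f', mV p (bd G (mF p f')) = bd H f';
  contr_bd_mi : forall f, mV p (bd G f) = mV p (bd G (mi p f));
  contr_fibre_conn : forall x y, mV p x = mV p y -> conn (ghost p) x y }.

Lemma iso_contraction (G H : graph) (p : morph G H) :
  aggregate G -> aggregate H -> is_iso p -> contraction p.
Proof.
move=> aggG aggH isop; have [[_ [injp [_ [_ [bdp _]]]]] [bijV _]] := isop.
have miid f : mi p f = f by apply: iso_mi.
split=> // [v'|f|f|f|x y /(bij_inj bijV) ->]; last exact: rt_refl.
- by case: bijV => g _ gK; exists (g v').
- by rewrite iso_in_img // miid eqxx.
- by rewrite !miid.
- by rewrite miid.
Qed.

Section VirtualContraction.
Variables (X : graph) (s t : flag X).
Hypotheses (aggX : aggregate X) (neq_st : s != t).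

Let c := vc_morph s t.

Lemma vc_qE x : val (vc_q s t x) = if x == bd X t then bd X s else x.
Proof.
rewrite /vc_q insubdK // unfold_in /=.
by case: ifP => [_|/negbT ->]; case: eqP; rewrite ?orbT.
Qed.

Lemma vc_in_img f : in_img c f = (f != s) && (f != t).
Proof.
apply/in_imgP/idP => [[f' <-]|stf]; first by rewrite ffunE; exact: (valP f').
by exists (exist _ f stf : vc_F s t); rewrite ffunE.
Qed.

Lemma vc_mi_s : mi c s = t. Proof. by rewrite ffunE eqxx. Qed.
Lemma vc_mi_t : mi c t = s. Proof. by rewrite ffunE eq_sym (negbTE neq_st) eqxx. Qed.
Lemma vc_mi_out f : f != s -> f != t -> mi c f = f.
Proof. by move=> /negbTE fs /negbTE ft; rewrite ffunE fs ft. Qed.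

Lemma vc_contraction : contraction c.
Proof.
have neq_ts : t != s by rewrite eq_sym.
split=> //.
- move=> v; exists (val v); apply: val_inj; rewrite ffunE vc_qE.
  by case: eqP => // vt; case: v vt => /= v /orP [/eqP nvt /nvt //|/eqP -> ->].
- by move=> f1 f2; rewrite !ffunE; apply: val_inj.
- move=> f; rewrite vc_in_img.
  have [->|fs] := eqVneq f s; first by rewrite vc_mi_s (negbTE neq_ts).
  have [->|ft] := eqVneq f t; first by rewrite vc_mi_t andbF (negbTE neq_st).
  by rewrite vc_mi_out // eqxx.
- move=> f; have [->|fs] := eqVneq f s; first by rewrite vc_mi_s vc_mi_t.
  have [->|ft] := eqVneq f t; first by rewrite vc_mi_t vc_mi_s.
  by rewrite !vc_mi_out.
- by move=> f'; rewrite !ffunE.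
- move=> f; rewrite !ffunE; apply: val_inj; rewrite !vc_qE.
  have [->|fs] := eqVneq f s; first by rewrite eqxx; case: ifP.
  by have [->|ft] := eqVneq f t; first by rewrite eqxx; case: ifP.
- move=> x y; rewrite !ffunE => /(congr1 val); rewrite !vc_qE.
  have edge_ts : @adj (ghost c) (bd X t) (bd X s).
    by exists t; rewrite /= vc_mi_t.
  have edge_st : @adj (ghost c) (bd X s) (bd X t).
    by exists s; rewrite /= vc_mi_s eq_sym.
  case: eqP => [->|_]; case: eqP => [->|_] E.
  + exact: rt_refl.
  + by rewrite -E; apply: rt_step.
  + by rewrite E; apply: rt_step.
  + by rewrite E; apply: rt_refl.
Qed.

End VirtualContraction.

Section Composition.
Variables (G H K : graph) (p : morph G H) (q : morph H K).
Hypotheses (cp : contraction p) (cq : contraction q).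

Let injp := contr_injF cp.

Lemma img_cases f : (exists f', f = mF p f') \/ ~~ in_img p f.
Proof. by case: (boolP (in_img p f)) => [/in_imgP [f' <-]|]; [left; exists f'|right]. Qed.

Lemma mcomp_adj x y : adj (G := ghost p) x y -> adj (G := ghost (mcomp q p)) x y.
Proof.
case=> f [mif bdxy]; have nIf : ~~ in_img p f by rewrite (contr_imgE cp).
by exists f; rewrite /= mcomp_mi_out.
Qed.

Lemma mcomp_conn_fibre x y : mV p x = mV p y -> conn (ghost (mcomp q p)) x y.
Proof.
move/(contr_fibre_conn cp); elim=> [u v /mcomp_adj|u|u v w _ IHuv _ IHvw].
- exact: rt_step.
- exact: rt_refl.
- exact: rt_trans IHuv IHvw.
Qed.

(* A ghost edge of [q] lifts through the flags [mF p f'] to a ghost edge of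
   [q o p]; the endpoints are joined within the [p]-fibres. *)
Lemma mcomp_conn_lift u w : conn (ghost q) u w ->
  forall x y, mV p x = u -> mV p y = w -> conn (ghost (mcomp q p)) x y.
Proof.
elim=> [{}u {}w [f' [miqf' [<- <-]]]|{}u|{}u v {}w _ IHuv _ IHvw] x y xu yw.
- apply: (@rt_trans _ _ _ (bd G (mF p f'))).
    by apply: mcomp_conn_fibre; rewrite (contr_bdF cp).
  apply: (@rt_trans _ _ _ (bd G (mF p (mi q f')))); last first.
    by apply: mcomp_conn_fibre; rewrite (contr_bdF cp).
  apply: rt_step; exists (mF p f'); rewrite /= mcomp_mi_img //.
  by rewrite (inj_eq injp).
- by apply: mcomp_conn_fibre; rewrite xu yw.
- have [z zv] := contr_surjV cp v.
  exact: rt_trans (IHuv x z xu zv) (IHvw z y zv yw).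
Qed.

Lemma mcomp_contraction : contraction (mcomp q p).
Proof.
split.
- exact: contr_aggl cp.
- exact: contr_aggr cq.
- move=> z; have [y <-] := contr_surjV cq z; have [x <-] := contr_surjV cp y.
  by exists x; rewrite ffunE.
- by move=> f1 f2; rewrite !ffunE => /injp /(contr_injF cq).
- move=> f; case: (img_cases f) => [[f' ->]|nIf].
    rewrite mcomp_mi_img // (inj_eq injp) -(contr_imgE cq).
    apply/in_imgP/in_imgP => -[g Eg]; exists g.
      by apply: injp; rewrite -Eg ffunE.
    by rewrite ffunE Eg.
  rewrite mcomp_mi_out // -(contr_imgE cp) (negbTE nIf).
  apply/negbTE/in_imgP => -[g Eg]; case/in_imgP: nIf.
  by exists (mF q g); rewrite -Eg ffunE.
- move=> f; case: (img_cases f) => [[f' ->]|nIf].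
    by rewrite !mcomp_mi_img // (contr_miK cq).
  have nImif : ~~ in_img p (mi p f).
    by rewrite (contr_imgE cp) (contr_miK cp) eq_sym -(contr_imgE cp).
  by rewrite !mcomp_mi_out // (contr_miK cp).
- by move=> f''; rewrite !ffunE (contr_bdF cp) (contr_bdF cq).
- move=> f; case: (img_cases f) => [[f' ->]|nIf].
    by rewrite mcomp_mi_img // !ffunE !(contr_bdF cp) (contr_bd_mi cq).
  by rewrite mcomp_mi_out // !ffunE (contr_bd_mi cp).
- move=> x y; rewrite !ffunE => /(contr_fibre_conn cq) uw.
  exact: mcomp_conn_lift uw x y erefl erefl.
Qed.

End Composition.

Lemma ctd_contraction (G H : graph) (p : morph G H) : ctd p -> contraction p.
Proof.
elim=> {G H p} [G H p aggG aggH /iso_contraction|X s t aggX /vc_contraction|].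
- exact.
- exact.
- by move=> G H K p q _ cp _ cq; exact: mcomp_contraction.
Qed.

Definition to_ghost (X Y : graph) (phi : morph X Y) (a : morph X X) :
  morph (ghost phi) (ghost phi) := @Morph (ghost phi) (ghost phi) (mV a) (mF a) (mi a).

Definition of_ghost (X Y : graph) (phi : morph X Y) (g : morph (ghost phi) (ghost phi)) :
  morph X X := @Morph X X (mV g) (mF g) (mi g).

Lemma to_ghost_inj (X Y : graph) (phi : morph X Y) : injective (to_ghost phi).
Proof. by case=> [? ? ?] [? ? ?] [-> -> ->]. Qed.

Lemma of_ghostK (X Y : graph) (phi : morph X Y) : cancel (@of_ghost X Y phi) (to_ghost phi).
Proof. by case. Qed.

Lemma to_ghost_mcomp (X Y : graph) (phi : morph X Y) (a c : morph X X) :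
  to_ghost phi (mcomp a c) = mcomp (to_ghost phi a) (to_ghost phi c).
Proof. by []. Qed.

Section ArrowAutomorphisms.
Variables (X Y : graph) (phi : morph X Y).
Hypothesis cphi : contraction phi.

Lemma conn_contr_fibre x y : conn (ghost phi) x y -> mV phi x = mV phi y.
Proof.
elim=> [u v [f [_ [<- <-]]]|//|u v w _ -> _ -> //].
exact: contr_bd_mi.
Qed.

Lemma ghost_aut_fibre (g : morph (ghost phi) (ghost phi)) x y : is_iso g ->
  mV phi x = mV phi y -> mV phi (mV g x) = mV phi (mV g y).
Proof.
by move=> isog /(contr_fibre_conn cphi) /(aut_conn isog) /conn_contr_fibre.
Qed.

Lemma mi_postcomp_iso (b : morph Y Y) : is_iso b -> mi (mcomp b phi) =1 mi phi.
Proof.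
move=> isob; apply: mcomp_mi_iso => [f|f']; last exact: iso_mi.
by rewrite (contr_imgE cphi) => /eqP.
Qed.

Lemma arrow_aut_miC (a : morph X X) (b : morph Y Y) :
  is_iso a -> is_iso b -> mcomp b phi = mcomp phi a ->
  forall f, mi phi (mF a f) = mF a (mi phi f).
Proof.
move=> isoa isob Eab f.
by rewrite -(mi_postcomp_iso isob) Eab mcomp_mi_img //; exact: iso_injF.
Qed.

Lemma contr_epi (b d : morph Y Y) :
  is_iso b -> is_iso d -> mcomp b phi = mcomp d phi -> b = d.
Proof.
move=> isob isod Ebd; apply: morph_eq => [y|f'|f]; last by rewrite !iso_mi.
- have [x <-] := contr_surjV cphi y.
  by have := congr1 (fun m => mV m x) Ebd; rewrite /= !ffunE.
- apply: (contr_injF cphi).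
  by have := congr1 (fun m => mF m f') Ebd; rewrite /= !ffunE.
Qed.

Lemma to_ghost_iso (a : morph X X) (b : morph Y Y) :
  arrow_aut phi (a, b) -> is_iso (to_ghost phi a).
Proof.
case=> /= isoa [isob Eab]; have [_ [bijV _]] := isoa.
apply: endo_iso => [v'|||f'|]; first by case: bijV => h _ hK; exists (h v').
- exact: iso_injF isoa.
- by move=> f; rewrite /= iso_mi.
- exact: iso_bdF isoa.
- exact: arrow_aut_miC isoa isob Eab.
Qed.

Lemma of_ghost_iso (g : morph (ghost phi) (ghost phi)) : is_iso g -> is_iso (of_ghost g).
Proof.
move=> isog; have [_ [bijV _]] := isog.
apply: endo_iso => [v'|||f'|f']; first by case: bijV => h _ hK; exists (h v').
- exact: iso_injF isog.
- by move=> f; exact: iso_mi isog.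
- exact: iso_bdF isog.
- by rewrite !(contr_aggl cphi).
Qed.

(* The automorphism [b] of [Y] is read off through the surjection [mV phi]
   and the injection [mF phi]; it is well defined because [g] preserves the
   fibres of [mV phi] and the image of [mF phi]. *)
Lemma ghost_aut_descends (g : morph (ghost phi) (ghost phi)) : is_iso g ->
  exists b : morph Y Y, is_iso b /\ mcomp b phi = mcomp phi (of_ghost g).
Proof.
move=> isog; have [_ [[ginvV _ ginvVK] [ginvF _ ginvFK]]] := isog.
have miC h : mi phi (mF g h) = mF g (mi phi h) := aut_ivC isog h.
have [sec secK] := fin_all_exists (contr_surjV cphi).
have /fin_all_exists [fsec fsecK] f' : exists f'', mF phi f'' = mF g (mF phi f').
  apply/in_imgP; rewrite (contr_imgE cphi) miC.
  by rewrite (inj_eq (iso_injF isog)) -(contr_imgE cphi); apply/in_imgP; exists f'.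
pose b := @Morph Y Y [ffun y => mV phi (mV g (sec y))] [ffun f' => fsec f'] [ffun f => f].
have bV x : mV b (mV phi x) = mV phi (mV g x).
  by rewrite ffunE; apply: (ghost_aut_fibre isog); rewrite secK.
have bF f' : mF phi (mF b f') = mF g (mF phi f') by rewrite ffunE fsecK.
have isob : is_iso b.
  apply: endo_iso => [y|f1 f2 Ef|f|f'|f'].
  - by exists (mV phi (ginvV (sec y))); rewrite bV ginvVK secK.
  - by apply: (contr_injF cphi); apply: (iso_injF isog); rewrite -!bF Ef.
  - by rewrite ffunE.
  - by rewrite -(contr_bdF cphi) bV bF (iso_bdF _ isog) (contr_bdF cphi).
  - by rewrite !(contr_aggr cphi).
exists b; split=> //; apply: morph_eq => [x|f'|f].
- by rewrite [LHS]ffunE [RHS]ffunE bV.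
- by rewrite [LHS]ffunE [RHS]ffunE bF.
rewrite (mi_postcomp_iso isob) -[f]ginvFK mcomp_mi_img; last exact: iso_injF isog.
exact: miC.
Qed.

End ArrowAutomorphisms.

Theorem corollary2p14 (X Y : graph) (phi : morph X Y) (hphi : ctd phi) :
  exists h : morph X X * morph Y Y -> morph (ghost phi) (ghost phi),
    (forall ab, arrow_aut phi ab -> is_iso (h ab)) /\
    (forall ab cd, arrow_aut phi ab -> arrow_aut phi cd -> h ab = h cd -> ab = cd) /\
    (forall g, is_iso g -> exists ab, arrow_aut phi ab /\ h ab = g) /\
    (forall ab cd, arrow_aut phi ab -> arrow_aut phi cd ->
       h (mcomp ab.1 cd.1, mcomp ab.2 cd.2) = mcomp (h ab) (h cd)).
Proof.
have cphi := ctd_contraction hphi.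
exists (fun ab => to_ghost phi ab.1); split; first by case=> a b /(to_ghost_iso cphi).
split.
  case=> a b [c d] [_ [isob Eab]] [_ [isod Ecd]] /= /to_ghost_inj Eac; subst c.
  by congr pair; apply: (contr_epi cphi isob isod); rewrite Eab Ecd.
split; last by move=> [a b] [c d] _ _; exact: to_ghost_mcomp.
move=> g isog; have [b [isob Eb]] := ghost_aut_descends cphi isog.
exists (of_ghost g, b); split; last exact: of_ghostK.
by split; [exact: of_ghost_iso|].
Qed.
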